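(* Let $F:\mathcal A\to\mathcal B$ be a triangle functor between triangulated categories. Then $F$ is faithful if and only if $F$ reflects splitting epimorphisms, i.e. whenever $v$ is a morphism of $\mathcal A$ such that $F(v)$ is a splitting epimorphism in $\mathcal B$, then $v$ is a splitting epimorphism in $\mathcal A$.
   Context: A triangle functor is a pair $(F,\xi)$ with $F$ additive and $\xi:F[1]\to[1]F$ a natural isomorphism such that $F$ sends distinguished triangles $(X,Y,Z,u,v,w)$ to distinguished triangles $(F(X),F(Y),F(Z),F(u),F(v),\xi_XF(w))$. *)

From HB Require Import structures.
From mathcomp Require Import all_boot all_algebra.

Set Implicit Arguments.
Unset Strict Implicit.
Unset Printing Implicit Defensive.
Import GRing.Theory.
Local Open Scope ring_scope.

Record PreaddCat := {
  Obj : Type;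
  Hom : Obj -> Obj -> zmodType;
  idm : forall X, Hom X X;
  comp : forall X Y Z, Hom Y Z -> Hom X Y -> Hom X Z;
  compA : forall X Y Z W (h : Hom Z W) (g : Hom Y Z) (f : Hom X Y),
      comp h (comp g f) = comp (comp h g) f;
  comp1m : forall X Y (f : Hom X Y), comp (idm Y) f = f;
  compm1 : forall X Y (f : Hom X Y), comp f (idm X) = f;
  compDl : forall X Y Z (g1 g2 : Hom Y Z) (f : Hom X Y),
      comp (g1 + g2) f = comp g1 f + comp g2 f;
  compDr : forall X Y Z (g : Hom Y Z) (f1 f2 : Hom X Y),
      comp g (f1 + f2) = comp g f1 + comp g f2
}.
Arguments idm {p} X.
Arguments comp {p X Y Z} g f.
Arguments Hom p X Y : clear implicits.

Definition is_zero_obj (C : PreaddCat) (Z : Obj C) : Prop := idm Z = 0.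

Definition is_biproduct (C : PreaddCat) (X Y P : Obj C)
  (i1 : Hom C X P) (i2 : Hom C Y P) (p1 : Hom C P X) (p2 : Hom C P Y) : Prop :=
  [/\ comp p1 i1 = idm X, comp p2 i2 = idm Y
    & comp i1 p1 + comp i2 p2 = idm P].

Definition additive (C : PreaddCat) : Prop :=
  (exists Z : Obj C, is_zero_obj Z) /\
  (forall X Y : Obj C, exists (P : Obj C) (i1 : Hom C X P) (i2 : Hom C Y P)
        (p1 : Hom C P X) (p2 : Hom C P Y), is_biproduct i1 i2 p1 p2).

Definition is_iso (C : PreaddCat) (X Y : Obj C) (f : Hom C X Y) : Prop :=
  exists g : Hom C Y X, comp g f = idm X /\ comp f g = idm Y.

Definition split_epi (C : PreaddCat) (X Y : Obj C) (f : Hom C X Y) : Prop :=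
  exists s : Hom C Y X, comp f s = idm Y.

Record AddFunctor (C D : PreaddCat) := {
  fobj : Obj C -> Obj D;
  fmap : forall X Y, Hom C X Y -> Hom D (fobj X) (fobj Y);
  fmap1 : forall X, fmap (idm X) = idm (fobj X);
  fmapM : forall X Y Z (g : Hom C Y Z) (f : Hom C X Y),
      fmap (comp g f) = comp (fmap g) (fmap f);
  fmapD : forall X Y (f g : Hom C X Y), fmap (f + g) = fmap f + fmap g
}.
Arguments fobj {C D} a X.
Arguments fmap {C D} a {X Y} _.

Definition faithful (C D : PreaddCat) (F : AddFunctor C D) : Prop :=
  forall X Y (f g : Hom C X Y), fmap F f = fmap F g -> f = g.

Definition full (C D : PreaddCat) (F : AddFunctor C D) : Prop :=
  forall X Y (g : Hom D (fobj F X) (fobj F Y)), exists f : Hom C X Y, fmap F f = g.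

Definition ess_surj (C D : PreaddCat) (F : AddFunctor C D) : Prop :=
  forall Y : Obj D, exists (X : Obj C) (f : Hom D (fobj F X) Y), is_iso f.

Definition equivalence (C D : PreaddCat) (F : AddFunctor C D) : Prop :=
  [/\ faithful F, full F & ess_surj F].

Record TriCat := {
  TCat :> PreaddCat;
  TC_additive : additive TCat;
  Sh : AddFunctor TCat TCat;
  Sh_equiv : equivalence Sh;
  dist : forall X Y Z : Obj TCat,
      Hom TCat X Y -> Hom TCat Y Z -> Hom TCat Z (fobj Sh X) -> Prop;
  TR1_iso : forall X Y Z X' Y' Z' (u : Hom TCat X Y) (v : Hom TCat Y Z)
      (w : Hom TCat Z (fobj Sh X)) (u' : Hom TCat X' Y') (v' : Hom TCat Y' Z')
      (w' : Hom TCat Z' (fobj Sh X'))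
      (a : Hom TCat X X') (b : Hom TCat Y Y') (c : Hom TCat Z Z'),
      is_iso a -> is_iso b -> is_iso c ->
      comp b u = comp u' a -> comp c v = comp v' b ->
      comp (fmap Sh a) w = comp w' c ->
      dist u v w -> dist u' v' w';
  TR1_id : forall (X Z : Obj TCat), is_zero_obj Z ->
      dist (idm X) (0 : Hom TCat X Z) (0 : Hom TCat Z (fobj Sh X));
  TR1_cone : forall X Y (u : Hom TCat X Y),
      exists (Z : Obj TCat) (v : Hom TCat Y Z) (w : Hom TCat Z (fobj Sh X)),
        dist u v w;
  TR2 : forall X Y Z (u : Hom TCat X Y) (v : Hom TCat Y Z)
      (w : Hom TCat Z (fobj Sh X)),
      dist u v w <-> dist v w (- fmap Sh u);
  TR3 : forall X Y Z X' Y' Z' (u : Hom TCat X Y) (v : Hom TCat Y Z)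
      (w : Hom TCat Z (fobj Sh X)) (u' : Hom TCat X' Y') (v' : Hom TCat Y' Z')
      (w' : Hom TCat Z' (fobj Sh X')) (a : Hom TCat X X') (b : Hom TCat Y Y'),
      dist u v w -> dist u' v' w' -> comp b u = comp u' a ->
      exists c : Hom TCat Z Z',
        comp c v = comp v' b /\ comp (fmap Sh a) w = comp w' c;
  TR4 : forall X Y Z Q1 Q2 Q3 (u : Hom TCat X Y) (v : Hom TCat Y Z)
      (b1 : Hom TCat Y Q1) (c1 : Hom TCat Q1 (fobj Sh X))
      (b2 : Hom TCat Z Q2) (c2 : Hom TCat Q2 (fobj Sh X))
      (b3 : Hom TCat Z Q3) (c3 : Hom TCat Q3 (fobj Sh Y)),
      dist u b1 c1 -> dist (comp v u) b2 c2 -> dist v b3 c3 ->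
      exists (a : Hom TCat Q1 Q2) (b : Hom TCat Q2 Q3),
        [/\ dist a b (comp (fmap Sh b1) c3),
            comp a b1 = comp b2 v, comp c2 a = c1,
            comp b b2 = b3 & comp c3 b = comp (fmap Sh u) c2]
}.
Arguments Sh t : clear implicits.
Arguments dist t {X Y Z} _ _ _.

Record TriFunctor (A B : TriCat) := {
  TF :> AddFunctor A B;
  xi : forall X : Obj A,
      Hom B (fobj TF (fobj (Sh A) X)) (fobj (Sh B) (fobj TF X));
  xi_iso : forall X, is_iso (xi X);
  xi_nat : forall X Y (f : Hom A X Y),
      comp (xi Y) (fmap TF (fmap (Sh A) f)) = comp (fmap (Sh B) (fmap TF f)) (xi X);
  xi_dist : forall X Y Z (u : Hom A X Y) (v : Hom A Y Z)
      (w : Hom A Z (fobj (Sh A) X)),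
      dist A u v w ->
      dist B (fmap TF u) (fmap TF v) (comp (xi X) (fmap TF w))
}.

(* A triangle functor F sends each distinguished triangle (u, v, w) to a
   distinguished one, and in a distinguished triangle u is a split epimorphism
   exactly when v = 0 (the identity of the target factors through the weak kernel
   u of v).
   If F is faithful and F u is a split epimorphism, then F v F u = 0 forces
   F v = 0, hence v = 0 and u splits.  Conversely, if F reflects split epimorphisms
   and F f = 0, rotate the triangle (f, g, h) of f to (g, h, -f[1]); its image has
   third morphism 0, so F h splits, hence h splits, and f[1] h = 0 gives f[1] = 0,
   whence f = 0 since the shift is faithful. *)
From mathcomp Require Import ssreflect ssrfun ssrbool ssralg.

Set Implicit Arguments.
Unset Strict Implicit.
Import GRing.Theory.
Local Open Scope ring_scope.

Section PreaddCatTheory.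
Variable C : PreaddCat.

Lemma compm0 X Y Z (g : Hom C Y Z) : comp g (0 : Hom C X Y) = 0.
Proof. by apply: (addrI (comp g 0)); rewrite -compDr !addr0. Qed.

Lemma comp0m X Y Z (f : Hom C X Y) : comp (0 : Hom C Y Z) f = 0.
Proof. by apply: (addrI (comp 0 f)); rewrite -compDl !addr0. Qed.

Lemma compmN X Y Z (g : Hom C Y Z) (f : Hom C X Y) : comp g (- f) = - comp g f.
Proof. by apply: (addrI (comp g f)); rewrite -compDr !subrr compm0. Qed.

Lemma compNm X Y Z (g : Hom C Y Z) (f : Hom C X Y) : comp (- g) f = - comp g f.
Proof. by apply: (addrI (comp g f)); rewrite -compDl !subrr comp0m. Qed.

Lemma split_epi_comp_eq0 X Y Z (g : Hom C Y Z) (h : Hom C X Y) :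
  split_epi h -> comp g h = 0 -> g = 0.
Proof. by move=> [s hs] gh0; rewrite -[g]compm1 -hs compA gh0 comp0m. Qed.

End PreaddCatTheory.

Arguments compm0 {C X Y Z} g.
Arguments comp0m {C X Y Z} f.

Section AddFunctorTheory.
Variables (C D : PreaddCat) (F : AddFunctor C D).

Lemma fmap0 X Y : fmap F (0 : Hom C X Y) = 0.
Proof. by apply: (addrI (fmap F (0 : Hom C X Y))); rewrite -fmapD !addr0. Qed.

Lemma fmapN X Y (f : Hom C X Y) : fmap F (- f) = - fmap F f.
Proof. by apply: (addrI (fmap F f)); rewrite -fmapD !subrr fmap0. Qed.

Lemma faithfulP :
  faithful F <-> forall X Y (f : Hom C X Y), fmap F f = 0 -> f = 0.
Proof.
split=> [Ff X Y f Ff0 | F0 X Y f g Ffg]; first by apply: Ff; rewrite Ff0 fmap0.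
by apply/subr0_eq/F0; rewrite fmapD fmapN Ffg subrr.
Qed.

End AddFunctorTheory.

Section DistinguishedTriangles.
Variables (T : TriCat) (X Y Z : Obj T).
Variables (u : Hom T X Y) (v : Hom T Y Z) (w : Hom T Z (fobj (Sh T) X)).
Hypothesis Duvw : dist T u v w.

Lemma dist_comp_eq0 : comp v u = 0.
Proof.
have [O O0] := proj1 (TC_additive T).
have [c [<- _]] := TR3 (a := idm X) (b := u) (TR1_id X O0) Duvw
  (etrans (compm1 _) (esym (compm1 _))).
exact: compm0.
Qed.

(* Compare the rotation (0, 0, -1) of the trivial triangle on Q with the rotation
   (v, w, -u[1]) of (u, v, w); the third component of the induced morphism is c
   with g[1] = u[1] c, and c lifts along the full and faithful shift. *)
Lemma dist_weak_kernel Q (g : Hom T Q Y) :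
  comp v g = 0 -> exists s : Hom T Q X, comp u s = g.
Proof.
move=> vg0.
have [O O0] := proj1 (TC_additive T).
have /TR2 DQ := TR1_id Q O0.
have /TR2 Drot := Duvw.
have [c [_ gc]] := TR3 (a := g) (b := 0) DQ Drot (etrans (compm0 _) (esym vg0)).
rewrite fmap1 compmN compm1 compNm in gc.
have [Sh_faithful Sh_full _] := Sh_equiv T.
have [s Shs] := Sh_full _ _ c.
by exists s; apply: Sh_faithful; rewrite fmapM Shs (oppr_inj gc).
Qed.

End DistinguishedTriangles.

Lemma dist_split_epi_fst (T : TriCat) (X Y Z : Obj T) (u : Hom T X Y)
    (w : Hom T Z (fobj (Sh T) X)) :
  dist T u 0 w -> split_epi u.
Proof. by move=> D; have [s us] := dist_weak_kernel D (comp0m (idm Y)); exists s. Qed.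

Lemma dist_split_epi_snd (T : TriCat) (X Y Z : Obj T) (u : Hom T X Y)
    (v : Hom T Y Z) :
  dist T u v 0 -> split_epi v.
Proof. by move/TR2; apply: dist_split_epi_fst. Qed.

Theorem proposition3 (A B : TriCat) (F : TriFunctor A B) :
  faithful F <->
  (forall (X Y : Obj A) (v : Hom A X Y), split_epi (fmap F v) -> split_epi v).
Proof.
split=> [Ff X Y v Fv_split | reflect_split].
- have [Z [g [h D]]] := TR1_cone v.
  have Fg0 : fmap F g = 0.
    exact: split_epi_comp_eq0 Fv_split (dist_comp_eq0 (xi_dist F D)).
  rewrite ((faithfulP F).1 Ff _ _ _ Fg0) in D.
  exact: dist_split_epi_fst D.
- apply/faithfulP=> X Y f Ff0.
  have [Z [g [h /TR2 D]]] := TR1_cone f.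
  have FD := xi_dist F D.
  have Fshift0 : comp (xi F Y) (fmap F (- fmap (Sh A) f)) = 0.
    by rewrite fmapN compmN xi_nat Ff0 fmap0 comp0m oppr0.
  rewrite Fshift0 in FD.
  have h_split := reflect_split _ _ h (dist_split_epi_snd FD).
  have Shf0 : fmap (Sh A) f = 0.
    apply: oppr_inj; rewrite oppr0.
    exact: split_epi_comp_eq0 h_split (dist_comp_eq0 ((TR2 _ _ _).1 D)).
  have [Sh_faithful _ _] := Sh_equiv A.
  by apply: Sh_faithful; rewrite Shf0 fmap0.
Qed.
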